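(* Let $1\le d$ and $n\ge d+2$ be integers, let $I\subseteq[n]$ with $|I|=d+1$, and let $A_I\subseteq V(P(d,n))$ be the set of $d$-tuples with pairwise distinct entries from $I$. Then the induced subgraph $P(d,n)[A_I]$ is isomorphic to $P(d,d+1)$ (hence bipartite), and for every maximal clique $K$ of $P(d,n)$, $|V(K)\cap A_I|\in\{0,2\}$.
   Context: For integers $1\le d\le n$, the partial permutation graph $P(d,n)$ has as vertices all $d$-tuples with pairwise distinct entries from $[n]=\{1,\dots,n\}$, two being adjacent iff they differ in exactly one coordinate. *)

From mathcomp Require Import all_boot.
Set Implicit Arguments. Unset Strict Implicit. Unset Printing Implicit Defensive.

Definition ppvert (d n : nat) := {t : d.-tuple 'I_n | uniq t}.

Definition padj (d n : nat) : rel (ppvert d n) :=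
  fun x y => #|[set i : 'I_d | tnth (val x) i != tnth (val y) i]| == 1.

Definition AI (d n : nat) (I : {set 'I_n}) : {set ppvert d n} :=
  [set x : ppvert d n | all (fun a => a \in I) (val x)].

Definition is_clique (d n : nat) (K : {set ppvert d n}) : Prop :=
  forall x y, x \in K -> y \in K -> x != y -> padj x y.

Definition is_max_clique (d n : nat) (K : {set ppvert d n}) : Prop :=
  is_clique K /\ forall K' : {set ppvert d n}, is_clique K' -> K \subset K' -> K' = K.

From mathcomp Require Import all_boot all_fingroup zify.
Set Implicit Arguments. Unset Strict Implicit. Unset Printing Implicit Defensive.

(* Two vertices of P(d,n) are adjacent iff they agree outside exactly one
   coordinate i, i.e. one lies on the "line" of the other in direction i
   (the vertices agreeing with x outside i).  Lines are cliques, and when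
   1 <= d < n every maximal clique is a line: it contains two adjacent
   vertices x, y differing at i, and any third member must agree with both
   outside i.
   (1) Transporting tuples along an enumeration [d+1] -> I of I is a
       graph isomorphism from P(d,d+1) onto the induced subgraph on A_I.
   (2) A vertex of P(d,d+1) misses exactly one value; appending it gives a
       permutation of [d+1].  Adjacent vertices yield permutations differing
       by a transposition, so the parity of that permutation is a proper
       2-colouring, which transfers to A_I through (1).
   (3) A line {z | z_j = x_j for j <> i} meets A_I only if the d-1 fixed
       entries lie in I, and then its members in A_I are given by their i-th
       entry, ranging over the 2 remaining elements of I. *)

Local Notation ent x i := (tnth (val x) i).

Section Adjacency.
Variables d n : nat.
Implicit Types x y z : ppvert d n.

Lemma vert_eq x y : (forall j, ent x j = ent y j) -> x = y.
Proof. by move=> E; apply: val_inj; apply: eq_from_tnth. Qed.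

Lemma ent_inj x : injective (tnth (val x)).
Proof. exact/tuple_uniqP/(valP x). Qed.

Lemma padjP x y :
  reflect (exists i, ent x i != ent y i /\ forall j, j != i -> ent x j = ent y j)
          (padj x y).
Proof.
apply: (iffP cards1P) => [[i /setP Di] | [i [xyi xyj]]]; exists i.
  have diffE j : (ent x j != ent y j) = (j == i) by move: (Di j); rewrite !inE.
  by split=> [|j /negbTE nji]; [rewrite diffE | apply/eqP/negbNE; rewrite diffE nji].
apply/setP => j; rewrite !inE.
by case: (eqVneq j i) => [-> // | nji]; rewrite xyj ?eqxx.
Qed.

Lemma padj_agree x y i j :
  padj x y -> ent x i != ent y i -> j != i -> ent x j = ent y j.
Proof.
move=> /padjP [k [xyk xyl]] xyi nji.
have eik : i = k by apply: contraNeq xyi => /xyl ->.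
by rewrite xyl // -eik.
Qed.

Lemma padjC x y : padj x y = padj y x.
Proof.
by apply/padjP/padjP => -[i [Di Ej]]; exists i; split=> [|j /Ej ->]; rewrite // eq_sym.
Qed.

Definition line x (i : 'I_d) : {set ppvert d n} :=
  [set z | [forall j, (j != i) ==> (ent z j == ent x j)]].

Lemma lineP x i z : reflect (forall j, j != i -> ent z j = ent x j) (z \in line x i).
Proof.
rewrite inE; apply: (iffP forallP) => [H j nji | H j].
  by move: (H j); rewrite nji => /eqP.
by apply/implyP => /H ->.
Qed.

Lemma line_clique x i : is_clique (line x i).
Proof.
move=> z w /lineP zx /lineP wx nzw; apply/padjP; exists i; split=> [|j nji].
  apply: contra nzw => /eqP zwi; apply/eqP/vert_eq => j.
  by case: (eqVneq j i) => [-> // | nji]; rewrite zx ?wx.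
by rewrite zx ?wx.
Qed.

Lemma line_ent_inj x i : {in line x i &, injective (fun z => ent z i)}.
Proof.
move=> z w /lineP zx /lineP wx zwi; apply: vert_eq => j.
by case: (eqVneq j i) => [-> // | nji]; rewrite zx ?wx.
Qed.

Lemma replace_ent x i (v : 'I_n) : (forall j, j != i -> v != ent x j) ->
  exists2 z, z \in line x i & ent z i = v.
Proof.
move=> fresh.
pose t := [tuple (if j == i then v else ent x j) | j < d].
have ut : uniq t.
  apply/tuple_uniqP => j k; rewrite !tnth_mktuple.
  case: (eqVneq j i) => [-> | nji]; case: (eqVneq k i) => [-> // | nki].
  - by move=> E; move: (fresh k nki); rewrite E eqxx.
  - by move=> E; move: (fresh j nji); rewrite -E eqxx.
  - exact: ent_inj.
exists (exist _ t ut); last by rewrite /= tnth_mktuple eqxx.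
by apply/lineP => j nji; rewrite /= tnth_mktuple (negbTE nji).
Qed.

Lemma ppvert_inhabited : d <= n -> inhabited (ppvert d n).
Proof.
move=> le_dn; have u0 : uniq [tuple widen_ord le_dn j | j < d].
  by apply/tuple_uniqP => j k; rewrite !tnth_mktuple => /(congr1 val) /= /ord_inj.
exact: inhabits (exist (fun t : d.-tuple 'I_n => uniq t) _ u0).
Qed.

End Adjacency.

Section MaximalCliques.
Variables d n : nat.
Hypotheses (d_gt0 : 0 < d) (d_lt_n : d < n).
Implicit Types x y z : ppvert d n.

Lemma fresh_value x : exists v : 'I_n, v \notin val x.
Proof.
apply/existsP; apply: contraT; rewrite negb_exists => /forallP all_in.
have : size (enum 'I_n) <= size (val x).
  by apply: uniq_leq_size (enum_uniq _) _ => a _; apply/negPn/all_in.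
by rewrite size_enum_ord size_tuple leqNgt d_lt_n.
Qed.

Lemma neighbour_ex x : exists2 y, padj x y & y != x.
Proof.
have [v vx] := fresh_value x.
have fresh j : j != Ordinal d_gt0 -> v != ent x j.
  by move=> _; apply: contra vx => /eqP ->; exact: mem_tnth.
have [y /lineP yx yi] := replace_ent fresh.
have xyi : ent x (Ordinal d_gt0) != ent y (Ordinal d_gt0).
  by rewrite yi; apply: contra vx => /eqP <-; exact: mem_tnth.
exists y; first by apply/padjP; exists (Ordinal d_gt0); split=> // j /yx.
by apply: contra xyi => /eqP ->.
Qed.

Lemma max_clique_not_sub1 x K : is_max_clique K -> ~~ (K \subset [set x]).
Proof.
move=> [_ maxK]; apply/negP => Kx.
have [y axy nyx] := neighbour_ex x.
have cl : is_clique [set x; y].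
  move=> a b; rewrite !inE => /orP [] /eqP -> /orP [] /eqP ->; rewrite ?eqxx //.
  by rewrite padjC.
have KE := maxK _ cl (subset_trans Kx (subsetUl _ _)).
by move: (subsetP Kx y); rewrite -KE !inE eqxx orbT (negbTE nyx) => /(_ isT).
Qed.

Lemma max_clique_line K : is_max_clique K -> exists x i, K = line x i.
Proof.
move=> maxK; have [clK _] := maxK; have [v] := ppvert_inhabited (ltnW d_lt_n).
have /subsetPn [x Kx _] := max_clique_not_sub1 v maxK.
have /subsetPn [y Ky] := max_clique_not_sub1 x maxK; rewrite inE eq_sym => nxy.
have /padjP [i [xyi xyj]] := clK x y Kx Ky nxy.
exists x, i; apply/esym/(proj2 maxK); first exact: line_clique.
apply/subsetP => z Kz; apply/lineP => j nji.
case: (eqVneq z x) => [-> // | nzx]; case: (eqVneq z y) => [-> | nzy]; first by rewrite xyj.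
(* If z differed from x at j, it would agree with x, hence differ from y, at i,
   so it would agree with y, hence with x, at j. *)
apply/eqP; apply: contraT => zxj.
have zxi : ent z i = ent x i.
  by apply: (padj_agree (clK z x Kz Kx nzx) zxj); rewrite eq_sym.
have zyi : ent z i != ent y i by rewrite zxi.
by rewrite (padj_agree (clK z y Kz Ky nzy) zyi nji) -xyj ?eqxx in zxj.
Qed.

End MaximalCliques.

Section Parity.
Variable d : nat.
Implicit Types x y : ppvert d d.+1.

(* A vertex of P(d,d+1) omits exactly one value of [d+1]. *)
Definition missing x : 'I_d.+1 := odflt ord0 [pick a | a \notin val x].

Lemma missingP x : missing x \notin val x.
Proof.
rewrite /missing; case: pickP => [a // | all_in]; exfalso.
have : size (enum 'I_d.+1) <= size (val x).
  by apply: uniq_leq_size (enum_uniq _) _ => a _; apply/negPn; rewrite all_in.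
by rewrite size_enum_ord size_tuple ltnn.
Qed.

Lemma missing_eq x a : a \notin val x -> a = missing x.
Proof.
move=> ax; apply/eqP; apply: contraT => na.
have : size (a :: missing x :: val x) <= size (enum 'I_d.+1).
  apply: uniq_leq_size => [|b _]; last by rewrite mem_enum.
  by rewrite /= inE negb_or na ax missingP (valP x).
by rewrite size_enum_ord /= size_tuple ltnn.
Qed.

Lemma padj_missing x y i : padj x y -> ent x i != ent y i -> ent y i = missing x.
Proof.
move=> axy xyi; apply: missing_eq; apply/negP => /tnthP [j yx].
case: (eqVneq j i) => [eji | nji]; first by rewrite yx eji eqxx in xyi.
rewrite (padj_agree axy xyi nji) in yx.
by rewrite (ent_inj yx) eqxx in nji.
Qed.

Definition completion_fun x (k : 'I_d.+1) : 'I_d.+1 :=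
  nth ord0 (rcons (val x) (missing x)) k.

Lemma completion_fun_inj x : injective (completion_fun x).
Proof.
move=> k l /eqP; rewrite nth_uniq ?size_rcons ?size_tuple ?ltn_ord //.
  by move/eqP/ord_inj.
by rewrite rcons_uniq missingP (valP x).
Qed.

Definition completion x : {perm 'I_d.+1} := perm (@completion_fun_inj x).

Lemma completion_nth x (k : 'I_d) :
  completion x (widen_ord (leqnSn d) k) = ent x k.
Proof. by rewrite permE /completion_fun /= nth_rcons size_tuple ltn_ord -tnth_nth. Qed.

Lemma completion_max x : completion x ord_max = missing x.
Proof. by rewrite permE /completion_fun /= nth_rcons size_tuple ltnn eqxx. Qed.

Lemma completion_adj x y i : padj x y -> ent x i != ent y i ->
  completion y = (tperm (widen_ord (leqnSn d) i) ord_max * completion x)%g.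
Proof.
move=> axy xyi; have yxi : ent y i != ent x i by rewrite eq_sym.
apply/permP => k; rewrite permM.
case: (eqVneq k ord_max) => [-> | nkm].
  rewrite completion_max tpermR completion_nth.
  by apply/esym/(padj_missing _ yxi); rewrite padjC.
have kd : k < d by move: nkm (ltn_ord k); rewrite -val_eqE /=; lia.
have -> : k = widen_ord (leqnSn d) (Ordinal kd) by apply: ord_inj.
move: (Ordinal kd) => k'.
case: (eqVneq k' i) => [-> | nki].
  by rewrite tpermL completion_max completion_nth (padj_missing axy xyi).
rewrite tpermD ?completion_nth ?(padj_agree axy xyi nki) //.
  by rewrite -val_eqE /= val_eqE eq_sym.
by rewrite -val_eqE /= neq_ltn ltn_ord orbT.
Qed.

Definition parity x : bool := odd_perm (completion x).

Lemma parity_adj x y : padj x y -> parity x != parity y.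
Proof.
move=> axy; have /padjP [i [xyi _]] := axy.
rewrite /parity (completion_adj axy xyi) odd_permM odd_tperm.
have -> : widen_ord (leqnSn d) i != ord_max by rewrite -val_eqE /= neq_ltn ltn_ord.
by case: (odd_perm _).
Qed.

End Parity.

Section Embedding.
Variables (d n : nat) (I : {set 'I_n}).
Hypothesis card_I : #|I| = d.+1.

Definition enumI (k : 'I_d.+1) : 'I_n := enum_val (cast_ord (esym card_I) k).

Lemma enumI_inj : injective enumI.
Proof. by move=> k l /enum_val_inj /cast_ord_inj. Qed.

Lemma enumI_in k : enumI k \in I.
Proof. exact: enum_valP. Qed.

Lemma enumI_onto a : a \in I -> exists k, enumI k = a.
Proof.
move=> aI; exists (cast_ord card_I (enum_rank_in aI a)).
by rewrite /enumI cast_ordK enum_rankK_in.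
Qed.

Definition relabel (x : ppvert d d.+1) : ppvert d n :=
  exist (fun t : d.-tuple 'I_n => uniq t) (map_tuple enumI (val x))
        (etrans (map_inj_uniq enumI_inj _) (valP x)).

Lemma relabel_inj : injective relabel.
Proof.
move=> x y /(congr1 (fun z => val (val z))) /= E.
by apply/val_inj/val_inj/(inj_map enumI_inj).
Qed.

Lemma relabel_AI x : relabel x \in AI d I.
Proof. by rewrite inE; apply/allP => a /mapP [k _ ->]; exact: enumI_in. Qed.

Lemma relabel_onto y : y \in AI d I -> exists x, relabel x = y.
Proof.
rewrite inE => /allP yI.
pose g (a : 'I_n) : 'I_d.+1 := odflt ord0 [pick k | enumI k == a].
have gK a : a \in I -> enumI (g a) = a.
  move=> aI; rewrite /g; case: pickP => [k /eqP // | none].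
  by have [k ka] := enumI_onto aI; move: (none k); rewrite ka eqxx.
have Ey : map enumI (map g (val y)) = val y.
  by rewrite -map_comp -[RHS]map_id; apply/eq_in_map => a /yI /gK.
have ut : uniq (map_tuple g (val y)).
  by rewrite /= -(map_inj_uniq enumI_inj) Ey (valP y).
by exists (exist (fun t : d.-tuple 'I_d.+1 => uniq t) _ ut); apply/val_inj/val_inj.
Qed.

Lemma relabel_adj x y : padj (relabel x) (relabel y) = padj x y.
Proof.
rewrite /padj (_ : [set _ | _] = [set i | ent x i != ent y i]) //.
by apply/setP => i; rewrite !inE /= !tnth_map (inj_eq enumI_inj).
Qed.

Lemma AI_two_colouring : exists c : ppvert d n -> bool,
  forall x y, x \in AI d I -> y \in AI d I -> padj x y -> c x != c y.
Proof.
exists (fun y => if [pick x | relabel x == y] is Some x then parity x else false).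
move=> x y /relabel_onto [x' <-] /relabel_onto [y' <-].
case: pickP => [x1 /eqP/relabel_inj -> | none]; last by move: (none x'); rewrite eqxx.
case: pickP => [y1 /eqP/relabel_inj -> | none]; last by move: (none y'); rewrite eqxx.
by rewrite relabel_adj; exact: parity_adj.
Qed.

End Embedding.

Section LinesInAI.
Variables (d n : nat) (I : {set 'I_n}).
Hypotheses (d_gt0 : 0 < d) (card_I : #|I| = d.+1).
Implicit Types x z : ppvert d n.

Lemma line_AI_empty x i j : j != i -> ent x j \notin I -> line x i :&: AI d I = set0.
Proof.
move=> nji xjI; apply/setP => z; rewrite in_setI in_set0 [_ \in AI _ _]inE.
apply/negP => /andP [/lineP /(_ j nji) zxj /allP zI].
by move: (zI _ (mem_tnth j (val z))); rewrite zxj (negbTE xjI).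
Qed.

Lemma line_AI_ent x i : (forall j, j != i -> ent x j \in I) ->
  [set ent z i | z in line x i :&: AI d I] = I :\: [set ent x j | j in [set~ i]].
Proof.
move=> fixedI; apply/setP => v; rewrite inE; apply/imsetP/andP.
  move=> [z]; rewrite in_setI [_ \in AI _ _]inE => /andP [/lineP zx /allP zI] ->.
  split; last exact/zI/mem_tnth.
  apply/imsetP => -[j]; rewrite !inE => nji; rewrite -zx //.
  by move/ent_inj => eij; rewrite eij eqxx in nji.
move=> [vS vI].
have fresh j : j != i -> v != ent x j.
  by move=> nji; apply: contra vS => /eqP ->; apply/imsetP; exists j; rewrite ?inE.
have [z zl zi] := replace_ent fresh.
exists z => //; rewrite in_setI zl [_ \in AI _ _]inE; apply/allP => a /tnthP [k ->].
case: (eqVneq k i) => [-> | nki]; first by rewrite zi.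
by move/lineP: zl => zx; rewrite zx //; exact: fixedI.
Qed.

Lemma line_AI x i : #|line x i :&: AI d I| = 0 \/ #|line x i :&: AI d I| = 2.
Proof.
case: (boolP [exists j, (j != i) && (ent x j \notin I)]).
  by move=> /existsP [j /andP [nji xjI]]; left; rewrite (line_AI_empty nji xjI) cards0.
move=> fixedI; right; have {}fixedI j : j != i -> ent x j \in I.
  by move=> nji; apply: contraR fixedI => xjI; apply/existsP; exists j; rewrite nji.
have card_fixed : #|[set ent x j | j in [set~ i]]| = d.-1.
  by rewrite card_in_imset ?cardsC1 ?card_ord // => j k _ _; exact: ent_inj.
have fixed_sub : [set ent x j | j in [set~ i]] \subset I.
  by apply/subsetP => a /imsetP [j]; rewrite !inE => /fixedI ? ->.
have ent_inj_AI : {in line x i :&: AI d I &, injective (fun z => ent z i)}.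
  by apply: sub_in2 (@line_ent_inj _ _ x i) => z /setIP [].
rewrite -(card_in_imset ent_inj_AI) line_AI_ent //.
rewrite cardsD (setIidPr fixed_sub) card_I card_fixed; lia.
Qed.

End LinesInAI.

Theorem mainTheorem6 (d n : nat) (I : {set 'I_n}) :
  1 <= d -> d + 2 <= n -> #|I| = d.+1 ->
  (* P(d,n)[A_I] is isomorphic to P(d,d+1) *)
  (exists f : ppvert d d.+1 -> ppvert d n,
      injective f /\
      (forall x, f x \in AI d I) /\
      (forall y, y \in AI d I -> exists x, f x = y) /\
      (forall x y, padj (f x) (f y) = padj x y)) /\
  (* hence bipartite *)
  (exists c : ppvert d n -> bool,
      forall x y, x \in AI d I -> y \in AI d I -> padj x y -> c x != c y) /\
  (* every maximal clique meets A_I in 0 or 2 vertices *)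
  (forall K : {set ppvert d n}, is_max_clique K ->
      #|K :&: AI d I| = 0 \/ #|K :&: AI d I| = 2).
Proof.
move=> d_gt0 dn card_I; have d_lt_n : d < n by lia.
split; [|split].
- exists (relabel card_I); split; first exact: relabel_inj.
  split; first exact: relabel_AI.
  split; [exact: relabel_onto | exact: relabel_adj].
- exact: AI_two_colouring card_I.
- move=> K /(max_clique_line d_gt0 d_lt_n) [x [i ->]]; exact: line_AI.
Qed.
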